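(* Let $N\ge 2$ be an integer and $a>0$ real. Let $H=H^{(N)}(a)$ be the real $N\times N$ tridiagonal matrix with $H_{nn}=a+2n-1$, $H_{n,n+1}=-n$, $H_{n+1,n}=-(a+n)$, all other entries zero. Write $D_n(a)=\prod_{j=1}^{n-1}(a+j)$ (so $D_1(a)=1$). Let $\Theta_0$ be the diagonal matrix with entries $(\Theta_0)_{nn}=(n-1)!/D_n(a)$, $n=1,\dots,N$. Let $\mathcal P_1=\mathcal P_1^{(N)}(a)$ be the real symmetric tridiagonal $N\times N$ matrix with $(\mathcal P_1)_{11}=0$, $$(\mathcal P_1)_{nn}=-\frac{2(n-1)\,(n-1)!}{D_n(a)}\quad(n=2,\dots,N),\qquad (\mathcal P_1)_{n,n+1}=(\mathcal P_1)_{n+1,n}=\frac{n!}{D_n(a)}\quad(n=1,\dots,N-1),$$ and all other entries zero. Then $H^\dagger\mathcal P_1=\mathcal P_1H$. Consequently, for every real $\alpha$ the tridiagonal matrix $\Theta_1(a,\alpha)=\Theta_0+\alpha\mathcal P_1$ satisfies $H^\dagger\Theta_1=\Theta_1H$, and it is a positive definite metric for $H$ whenever $|\alpha|$ is sufficiently small.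
   Context: $H^\dagger$ is the conjugate transpose. A metric for $H$ is a positive definite Hermitian matrix $\Theta$ with $H^\dagger\Theta=\Theta H$. The entries of $\mathcal P_1$ do not depend on $N$ (apart from the truncation). *)

From HB Require Import structures.
From mathcomp Require Import all_boot all_order all_algebra.
Set Implicit Arguments. Unset Strict Implicit. Unset Printing Implicit Defensive.
Import Order.TTheory GRing.Theory Num.Theory.
Local Open Scope ring_scope.

(* Indices: the paper's row index n = 1..N corresponds to i : 'I_N with n = i+1. *)

Definition Dn (R : realFieldType) (a : R) (n : nat) : R :=
  \prod_(1 <= j < n) (a + j%:R).

Definition Hmat (R : realFieldType) (N : nat) (a : R) : 'M[R]_N :=
  \matrix_(i < N, j < N)
    if (j : nat) == i then a + (2 * i + 1)%:R
    else if (j : nat) == i.+1 then - (i.+1)%:R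
    else if (i : nat) == j.+1 then - (a + (j.+1)%:R)
    else 0.

Definition Theta0 (R : realFieldType) (N : nat) (a : R) : 'M[R]_N :=
  \matrix_(i < N, j < N)
    if (j : nat) == i then (i`!)%:R / Dn a i.+1 else 0.

Definition P1 (R : realFieldType) (N : nat) (a : R) : 'M[R]_N :=
  \matrix_(i < N, j < N)
    if (j : nat) == i then
      (if (i : nat) == 0%N then 0 else - ((2 * i * i`!)%:R / Dn a i.+1))
    else if (j : nat) == i.+1 then ((i.+1)`!)%:R / Dn a i.+1
    else if (i : nat) == j.+1 then ((j.+1)`!)%:R / Dn a j.+1
    else 0.

Definition Theta1 (R : realFieldType) (N : nat) (a alpha : R) : 'M[R]_N :=
  Theta0 N a + alpha *: P1 N a.

(* For a real matrix the conjugate transpose is the transpose. *)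
Definition pos_def (R : realFieldType) (N : nat) (T : 'M[R]_N) : Prop :=
  T^T = T /\ forall x : 'cV[R]_N, x != 0 -> 0 < (x^T *m T *m x) 0 0.

Definition is_metric (R : realFieldType) (N : nat) (H T : 'M[R]_N) : Prop :=
  pos_def T /\ H^T *m T = T *m H.

From HB Require Import structures.
From mathcomp Require Import all_boot all_order all_algebra.
From mathcomp Require Import reals.
From mathcomp Require Import ring lra.
Import Order.TTheory GRing.Theory Num.Theory.
Set Implicit Arguments. Unset Strict Implicit.
Local Open Scope ring_scope.

(** Theta0 is diagonal and satisfies detailed balance with the tridiagonal H,
   theta_{n+1} (a + n) = n theta_n, so Theta0 H is symmetric.  The key point is
   that P1 = Theta0 ((a + 1) - H): a polynomial in H times a metric inherits
   H^T X = X H.  Positivity of Theta0 + alpha P1 for small alpha follows from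
   x^T Theta0 x >= (min theta) |x|^2 and |x^T P1 x| <= C |x|^2. *)

Section PerturbDiagonal.
Variables (R : realFieldType) (n : nat).

Definition qform (M : 'M[R]_n) (x : 'cV[R]_n) : R := (x^T *m M *m x) 0 0.

Definition sqnorm (x : 'cV[R]_n) : R := \sum_(k < n) x k 0 ^+ 2.

Lemma qformE (M : 'M[R]_n) x : qform M x = \sum_(i < n) \sum_(k < n) x i 0 * M i k * x k 0.
Proof.
rewrite /qform mxE exchange_big; apply: eq_bigr => k _.
by rewrite mxE mulr_suml; apply: eq_bigr => i _; rewrite mxE.
Qed.

Lemma qformD M M' x : qform (M + M') x = qform M x + qform M' x.
Proof. by rewrite /qform mulmxDr mulmxDl mxE. Qed.

Lemma qformZ c M x : qform (c *: M) x = c * qform M x.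
Proof. by rewrite /qform -scalemxAr -scalemxAl mxE. Qed.

Lemma sqr_le_sqnorm (x : 'cV[R]_n) i : x i 0 ^+ 2 <= sqnorm x.
Proof. by rewrite /sqnorm (bigD1 i) //= lerDl sumr_ge0 // => k _; rewrite sqr_ge0. Qed.

Lemma sqnorm_gt0 (x : 'cV[R]_n) : x != 0 -> 0 < sqnorm x.
Proof.
move=> x_neq0; have [i xi_neq0] : exists i, x i 0 != 0.
  apply/existsP; apply: contraNT x_neq0; rewrite negb_exists => /forallP x0.
  by apply/eqP/matrixP => i j; rewrite ord1 mxE; apply/eqP/negbNE/x0.
by apply: lt_le_trans (sqr_le_sqnorm x i); rewrite exprn_even_gt0.
Qed.

Lemma qform_diag_mx_ge (d : 'rV[R]_n) u x :
  (forall k, u <= d 0 k) -> u * sqnorm x <= qform (diag_mx d) x.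
Proof.
move=> ud; rewrite /qform mul_mx_diag mxE /sqnorm mulr_sumr; apply: ler_sum => k _.
by rewrite !mxE mulrAC -expr2 mulrC ler_wpM2l ?sqr_ge0.
Qed.

Lemma normr_qform_le M x :
  `|qform M x| <= (\sum_(i < n) \sum_(k < n) `|M i k|) * sqnorm x.
Proof.
rewrite qformE mulr_suml; apply: le_trans (ler_norm_sum _ _ _) _.
apply: ler_sum => i _; rewrite mulr_suml; apply: le_trans (ler_norm_sum _ _ _) _.
apply: ler_sum => k _; rewrite !normrM mulrAC mulrC ler_wpM2l //.
have := sqr_le_sqnorm x i; have := sqr_le_sqnorm x k.
rewrite -!(real_normK (num_real (x _ 0))); have := normr_ge0 (x i 0).
have := normr_ge0 (x k 0); nra.
Qed.

Lemma pos_row_lbound (d : 'rV[R]_n) :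
  (forall k, 0 < d 0 k) -> exists2 u, 0 < u & forall k, u <= d 0 k.
Proof.
move=> d_gt0; exists (\big[Num.min/1]_k d 0 k); last by move=> k; exact: bigmin_le.
by apply: lt_bigmin => // k _; exact: d_gt0.
Qed.

Lemma pos_def_diag_mx_add (d : 'rV[R]_n) (P : 'M[R]_n) :
  (forall k, 0 < d 0 k) -> P^T = P ->
  exists2 eps, 0 < eps & forall alpha, `|alpha| < eps -> pos_def (diag_mx d + alpha *: P).
Proof.
move=> d_gt0 P_sym; have [u u_gt0 ud] := pos_row_lbound d_gt0.
set C := \sum_(i < n) \sum_(k < n) `|P i k|.
have C_ge0 : 0 <= C by do 2!apply: sumr_ge0 => ? _.
exists (u / (C + 1)) => [|alpha alpha_lt]; first by rewrite divr_gt0 //; lra.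
split; first by rewrite linearD linearZ /= tr_diag_mx P_sym.
move=> x /sqnorm_gt0 S_gt0; rewrite -/(qform _ x) qformD qformZ.
have lowerD := qform_diag_mx_ge x ud.
have upperP := normr_qform_le P x; rewrite -/C in upperP.
have alphaC : `|alpha| * (C + 1) < u by rewrite -ltr_pdivlMr //; lra.
have : `|alpha * qform P x| <= `|alpha| * (C * sqnorm x).
  by rewrite normrM ler_wpM2l.
have := ler_norm (- (alpha * qform P x)); rewrite normrN.
have := normr_ge0 alpha; nra.
Qed.

End PerturbDiagonal.

Section Metrics.
Variables (R : realFieldType) (a : R).
Hypothesis a_gtN1 : -1 < a.

Lemma DnS k : Dn a k.+2 = Dn a k.+1 * (a + k.+1%:R).
Proof. by rewrite /Dn big_nat_recr. Qed.

Lemma a_addSn_gt0 k : 0 < a + k.+1%:R.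
Proof. by rewrite -natr1; have := ler0n R k; have := a_gtN1; lra. Qed.

Lemma Dn_gt0 k : 0 < Dn a k.
Proof.
rewrite /Dn big_nat_cond; apply: prodr_gt0 => -[|j] // _; exact: a_addSn_gt0.
Qed.

Definition theta0 (i : nat) : R := i`!%:R / Dn a i.+1.

Lemma theta0_balance i : theta0 i.+1 * (a + i.+1%:R) = theta0 i * i.+1%:R.
Proof.
have D_gt0 := Dn_gt0 i.+1.
rewrite /theta0 DnS factS natrM; field.
by rewrite (gt_eqF D_gt0) gt_eqF //; have := a_addSn_gt0 i; rewrite -natr1; lra.
Qed.

Variable N : nat.

Lemma Theta0_diag : Theta0 N a = diag_mx (\row_(i < N) theta0 i).
Proof. by apply/matrixP => i j; rewrite !mxE eq_sym val_eqE; case: eqP. Qed.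

Lemma Hmat_Theta0_comm : (Hmat N a)^T *m Theta0 N a = Theta0 N a *m Hmat N a.
Proof.
rewrite Theta0_diag mul_mx_diag mul_diag_mx; apply/matrixP => i j; rewrite !mxE.
case: (ltngtP i j) => [ij|ji|/val_inj->]; last by rewrite mulrC.
- rewrite (@ltn_eqF i j.+1); last by rewrite ltnS ltnW.
  case: eqP => [->|_]; last by rewrite mul0r mulr0.
  by rewrite mulNr mulrC theta0_balance mulrN.
- rewrite (@ltn_eqF j i.+1); last by rewrite ltnS ltnW.
  case: eqP => [->|_]; last by rewrite mul0r mulr0.
  by rewrite mulrN theta0_balance mulNr mulrC.
Qed.

Lemma P1_Theta0 : P1 N a = Theta0 N a *m ((a + 1)%:M - Hmat N a).
Proof.
rewrite Theta0_diag mul_diag_mx; apply/matrixP => i j; rewrite !mxE -val_eqE /=.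
case: (ltngtP i j) => [ij|ji|/val_inj->]; rewrite /= ?mulr0n ?mulr1n.
- rewrite (@ltn_eqF i j.+1); last by rewrite ltnS ltnW.
  case: eqP => _; last by rewrite subr0 mulr0.
  by rewrite /theta0 factS natrM; ring.
- rewrite (@ltn_eqF j i.+1); last by rewrite ltnS ltnW.
  case: eqP => [->|_]; last by rewrite subr0 mulr0.
  by rewrite sub0r opprK theta0_balance /theta0 factS natrM; ring.
- move: (j : nat) => k.
  case: eqP => [->|_]; rewrite /theta0 !natrD !natrM; ring.
Qed.

Lemma Hmat_P1_comm : (Hmat N a)^T *m P1 N a = P1 N a *m Hmat N a.
Proof.
rewrite P1_Theta0 mulmxA Hmat_Theta0_comm -!mulmxA; congr (_ *m _).
by rewrite mulmxBl mulmxBr scalar_mxC.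
Qed.

Lemma Hmat_Theta1_comm alpha :
  (Hmat N a)^T *m Theta1 N a alpha = Theta1 N a alpha *m Hmat N a.
Proof.
by rewrite /Theta1 mulmxDr mulmxDl -scalemxAr -scalemxAl Hmat_Theta0_comm Hmat_P1_comm.
Qed.

Lemma P1_sym : (P1 N a)^T = P1 N a.
Proof.
apply/matrixP => i j; rewrite !mxE.
case: (ltngtP i j) => [ij|ji|/val_inj->] //.
- by rewrite (@ltn_eqF i j.+1) // ltnS ltnW.
- by rewrite (@ltn_eqF j i.+1) // ltnS ltnW.
Qed.

Lemma Theta1_pos_def_small :
  exists2 eps, 0 < eps & forall alpha, `|alpha| < eps -> pos_def (Theta1 N a alpha).
Proof.
rewrite /Theta1 Theta0_diag; apply: pos_def_diag_mx_add P1_sym => k.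
by rewrite mxE divr_gt0 ?ltr0n ?fact_gt0 ?Dn_gt0.
Qed.

End Metrics.

Theorem lemma2 (R : realType) (N : nat) (a : R) :
  (2 <= N)%N -> 0 < a ->
  [/\ (Hmat N a)^T *m P1 N a = P1 N a *m Hmat N a,
      (forall alpha : R,
          (Hmat N a)^T *m Theta1 N a alpha = Theta1 N a alpha *m Hmat N a)
    & exists2 eps : R, 0 < eps &
        forall alpha : R, `|alpha| < eps -> is_metric (Hmat N a) (Theta1 N a alpha)].
Proof.
move=> _ a_gt0; have a_gtN1 : -1 < a by lra.
split; [exact: Hmat_P1_comm | exact: Hmat_Theta1_comm |].
have [eps eps_gt0 pd] := Theta1_pos_def_small a_gtN1 N.
by exists eps => // alpha /pd; split; last exact: Hmat_Theta1_comm.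
Qed.
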